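(* Let $A$ be a finite set with $N\ge 2$ elements and let $(v_{xy})$ be a Llull matrix on $A$ with CLC structure such that $t_{xy}>0$ for all distinct $x,y\in A$. Define $\rho_x=\frac{1}{N-1}\sum_{y\neq x}v_{xy}$ and $\sigma_x=\frac{1}{N-1}\sum_{y\neq x}v_{xy}/t_{xy}$. Then for all $x,y\in A$, $\sigma_x>\sigma_y$ if and only if $\rho_x>\rho_y$.
   Context: A Llull matrix on a finite set $A$ is an assignment to each ordered pair of distinct elements $x\neq y$ of $A$ of a number $v_{xy}\in[0,1]$ such that $v_{xy}+v_{yx}\le 1$. Turnouts: $t_{xy}=v_{xy}+v_{yx}$; margins: $m_{xy}=v_{xy}-v_{yx}$. The matrix has CLC structure if there is a total order $\xi$ on $A$ such that, writing $x<_\xi y$ when $x$ precedes $y$ and $x'$ for the immediate successor of $x$ in $\xi$ (when it exists): (i) $v_{xy}\ge v_{yx}$ whenever $x<_\xi y$; (ii) $v_{xz}=\max(v_{xy},v_{yz})$ whenever $x<_\xi y<_\xi z$; (iii) $v_{zx}=\min(v_{zy},v_{yx})$ whenever $x<_\xi y<_\xi z$; (iv) $0\le t_{xz}-t_{x'z}\le m_{xx'}$ whenever $x'$ exists and $z\notin\{x,x'\}$. *)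

From HB Require Import structures.
From mathcomp Require Import all_boot all_order all_algebra.
Set Implicit Arguments. Unset Strict Implicit. Unset Printing Implicit Defensive.
Import Order.TTheory GRing.Theory Num.Theory.
Local Open Scope ring_scope.

Section Llull.
Variables (R : realFieldType) (A : finType).

(* A Llull matrix: only entries v x y with x != y are meaningful. *)
Definition llull_matrix (v : A -> A -> R) : Prop :=
  forall x y : A, x != y -> 0 <= v x y /\ v x y <= 1 /\ v x y + v y x <= 1.

Definition turnout (v : A -> A -> R) (x y : A) : R := v x y + v y x.
Definition margin (v : A -> A -> R) (x y : A) : R := v x y - v y x.

Definition strict_total_order (lt : rel A) : Prop :=
  (forall x, ~~ lt x x) /\
  (forall x y z, lt x y -> lt y z -> lt x z) /\
  (forall x y, x != y -> lt x y || lt y x).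

Definition imm_succ (lt : rel A) (x x' : A) : Prop :=
  lt x x' /\ forall z, ~ (lt x z /\ lt z x').

Definition CLC (v : A -> A -> R) : Prop :=
  exists lt : rel A, strict_total_order lt /\
    (forall x y, lt x y -> v y x <= v x y) /\
    (forall x y z, lt x y -> lt y z -> v x z = Num.max (v x y) (v y z)) /\
    (forall x y z, lt x y -> lt y z -> v z x = Num.min (v z y) (v y x)) /\
    (forall x x' z, imm_succ lt x x' -> z != x -> z != x' ->
       0 <= turnout v x z - turnout v x' z /\
       turnout v x z - turnout v x' z <= margin v x x').

Definition rho (v : A -> A -> R) (x : A) : R :=
  ((#|A|.-1)%:R)^-1 * \sum_(y | y != x) v x y.

Definition sigma (v : A -> A -> R) (x : A) : R :=
  ((#|A|.-1)%:R)^-1 * \sum_(y | y != x) v x y / turnout v x y.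

End Llull.

From HB Require Import structures.
From mathcomp Require Import all_boot all_order all_algebra.
From mathcomp Require Import lra.
Import Order.TTheory GRing.Theory Num.Theory.
Local Open Scope ring_scope.
Set Implicit Arguments. Unset Strict Implicit. Unset Printing Implicit Defensive.

(* Let x' be the immediate successor of x in the CLC order.  For every third
   candidate z, the CLC axioms give v x' z <= v x z <= v x' z + m_xx' and
   v z x <= v z x'; hence row x' of v is dominated by row x, and so is its row
   of ratios v/t (a ratio p/(p+q) grows with p and decreases with q).  If the
   margin m_xx' is positive, the entry v x x' > v x' x makes both rho and
   sigma drop strictly from x to x'; if it is zero, the two rows coincide
   entrywise together with their turnouts, so rho and sigma stay equal.
   Chaining along the order, rho and sigma compare alike for any pair. *)

Lemma ler_ratio (R : realFieldType) (p q p' q' : R) :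
  0 <= p -> p <= p' -> 0 <= q' -> q' <= q -> 0 < p + q -> 0 < p' + q' ->
  p / (p + q) <= p' / (p' + q').
Proof.
move=> p_ge0 le_pp' q'_ge0 le_q'q pq_gt0 pq'_gt0.
rewrite ler_pdivrMr // mulrAC ler_pdivlMr //; nra.
Qed.

Lemma turnoutC (R : realFieldType) (A : finType) (v : A -> A -> R) (x y : A) :
  turnout v x y = turnout v y x.
Proof. exact: addrC. Qed.

Section IntervalInduction.
Variables (A : finType) (lt : rel A).
Hypothesis lt_order : strict_total_order lt.

Definition between (x y : A) : {set A} := [set z | lt x z && lt z y].

Lemma lt_irr x : ~~ lt x x.
Proof. by have [irr _] := lt_order. Qed.

Lemma lt_trans x y z : lt x y -> lt y z -> lt x z.
Proof. by have [_ [trans _]] := lt_order; exact: trans. Qed.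

Lemma lt_total x y : x != y -> lt x y || lt y x.
Proof. by have [_ [_ total]] := lt_order; exact: total. Qed.

Lemma lt_neq x y : lt x y -> x != y.
Proof. by apply: contraTneq => ->; exact: lt_irr. Qed.

Lemma between_proper_l x w y : w \in between x y -> between x w \proper between x y.
Proof.
rewrite inE => /andP [lt_xw lt_wy]; apply/properP; split.
  by apply/subsetP => z; rewrite !inE => /andP [-> /lt_trans]; apply.
by exists w; rewrite !inE ?lt_xw ?lt_wy ?(negbTE (lt_irr w)) ?andbF.
Qed.

Lemma between_proper_r x w y : w \in between x y -> between w y \proper between x y.
Proof.
rewrite inE => /andP [lt_xw lt_wy]; apply/properP; split.
  by apply/subsetP => z; rewrite !inE => /andP [/(lt_trans lt_xw) -> ->].
by exists w; rewrite !inE ?lt_xw ?lt_wy ?(negbTE (lt_irr w)).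
Qed.

Lemma imm_succ_between0 x y : lt x y -> between x y = set0 -> imm_succ lt x y.
Proof.
move=> lt_xy between_xy0; split=> // z [lt_xz lt_zy].
by have := in_set0 z; rewrite -between_xy0 inE lt_xz lt_zy.
Qed.

Lemma lt_succ_ind (P : A -> A -> Prop) :
  (forall x y, imm_succ lt x y -> P x y) ->
  (forall x y z, P x y -> P y z -> P x z) ->
  forall x y, lt x y -> P x y.
Proof.
move=> P_succ P_trans.
suff ind n x y : (#|between x y| < n)%N -> lt x y -> P x y.
  by move=> x y; apply: (ind #|between x y|.+1).
elim: n x y => [//|n IH] x y card_lt lt_xy.
have [between_xy0|[w w_in]] := set_0Vmem (between x y).
  exact/P_succ/imm_succ_between0.
have := w_in; rewrite inE => /andP [lt_xw lt_wy].
apply: (P_trans _ w); apply: IH => //; rewrite -ltnS; apply: (leq_trans _ card_lt);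
  rewrite ltnS; apply: proper_card.
- exact: between_proper_l.
- exact: between_proper_r.
Qed.

End IntervalInduction.

Definition rho_sigma_ge (R : realFieldType) (A : finType) (v : A -> A -> R) (x y : A) :=
  (rho v y < rho v x /\ sigma v y < sigma v x) \/
  (rho v y = rho v x /\ sigma v y = sigma v x).

Lemma rho_sigma_ge_trans (R : realFieldType) (A : finType) (v : A -> A -> R) (x y z : A) :
  rho_sigma_ge v x y -> rho_sigma_ge v y z -> rho_sigma_ge v x z.
Proof.
by case=> [[rho_xy sigma_xy]|[rho_xy sigma_xy]] [[rho_yz sigma_yz]|[rho_yz sigma_yz]];
  [left|left|left|right]; split; lra.
Qed.

Lemma rho_sigma_ge_ltP (R : realFieldType) (A : finType) (v : A -> A -> R) (x y : A) :
  rho_sigma_ge v x y ->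
  (sigma v y < sigma v x <-> rho v y < rho v x) /\
  (sigma v x < sigma v y <-> rho v x < rho v y).
Proof. by case=> [[lt_rho lt_sigma]|[-> ->]]; split; split=> h; lra. Qed.

Section CLCRows.
Variables (R : realFieldType) (A : finType) (v : A -> A -> R) (lt : rel A).
Hypotheses (lt_order : strict_total_order lt)
  (v_dom : forall x y, lt x y -> v y x <= v x y)
  (v_max : forall x y z, lt x y -> lt y z -> v x z = Num.max (v x y) (v y z))
  (v_min : forall x y z, lt x y -> lt y z -> v z x = Num.min (v z y) (v y x))
  (turnout_step : forall x x' z, imm_succ lt x x' -> z != x -> z != x' ->
     0 <= turnout v x z - turnout v x' z /\
     turnout v x z - turnout v x' z <= margin v x x')
  (v_llull : llull_matrix v)
  (turnout_gt0 : forall x y, x != y -> 0 < turnout v x y).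

Section Successor.
Variables x x' : A.
Hypothesis succ : imm_succ lt x x'.

Lemma succ_row_bounds z : z != x -> z != x' ->
  [/\ v x' z <= v x z, v x z <= v x' z + margin v x x' & v z x <= v z x'].
Proof.
move=> zx zx'; have lt_xx' := succ.1.
have le_x'x := v_dom lt_xx'.
have [_ turnout_le] := turnout_step succ zx zx'.
move: turnout_le; rewrite /turnout /margin.
have [lt_zx|nlt_zx] := boolP (lt z x).
  rewrite (v_min lt_zx lt_xx') (v_max lt_zx lt_xx').
  have le_xz := v_dom lt_zx.
  by case: (leP (v x' x) (v x z)); case: (leP (v z x) (v x x')) => *; split; lra.
have x_neq_z : x != z by rewrite eq_sym.
have x'_neq_z : x' != z by rewrite eq_sym.
have lt_xz : lt x z by have := lt_total lt_order x_neq_z; rewrite (negbTE nlt_zx) orbF.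
have lt_x'z : lt x' z.
  have /orP [//|lt_zx'] := lt_total lt_order x'_neq_z.
  by case: (succ.2 z).
rewrite (v_max lt_xx' lt_x'z) (v_min lt_xx' lt_x'z).
have le_zx' := v_dom lt_x'z.
by case: (leP (v x x') (v x' z)); case: (leP (v z x') (v x' x)) => *; split; lra.
Qed.

Lemma succ_ratio_le z : z != x -> z != x' ->
  v x' z / turnout v x' z <= v x z / turnout v x z.
Proof.
move=> zx zx'; have [le_x'z _ le_zx] := succ_row_bounds zx zx'.
have x'_neq_z : x' != z by rewrite eq_sym.
have [x'z_ge0 _] := v_llull x'_neq_z; have [zx_ge0 _] := v_llull zx.
by apply: ler_ratio; rewrite ?turnout_gt0 // eq_sym.
Qed.

Lemma succ_row_eq z : margin v x x' = 0 -> z != x -> z != x' ->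
  v x z = v x' z /\ turnout v x z = turnout v x' z.
Proof.
move=> m0 zx zx'; have [le_x'z le_xz _] := succ_row_bounds zx zx'.
have [t_ge t_le] := turnout_step succ zx zx'.
by split; lra.
Qed.

Lemma rho_sigma_ge_succ : rho_sigma_ge v x x'.
Proof.
have x_neq_x' := lt_neq lt_order succ.1.
have c_gt0 : 0 < ((#|A|.-1)%:R : R)^-1.
  have card_gt1 : (1 < #|A|)%N by apply/card_gt1P; exists x, x'.
  by rewrite invr_gt0 ltr0n -subn1 subn_gt0.
have split_x (F : A -> R) : \sum_(z | z != x) F z = F x' + \sum_(z | (z != x) && (z != x')) F z.
  by rewrite (bigD1 x') // eq_sym.
have split_x' (F : A -> R) : \sum_(z | z != x') F z = F x + \sum_(z | (z != x) && (z != x')) F z.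
  by rewrite (bigD1 x) //; congr (_ + _); apply: eq_bigl => z; rewrite andbC.
rewrite /rho_sigma_ge /rho /sigma (split_x (v x)) (split_x' (v x')).
rewrite (split_x (fun z => v x z / turnout v x z)).
rewrite (split_x' (fun z => v x' z / turnout v x' z)) [turnout v x' x]turnoutC.
have : 0 <= margin v x x' by rewrite subr_ge0 v_dom //; exact: succ.1.
rewrite le0r => /orP [/eqP m0|m_gt0].
  have -> : v x' x = v x x' by move: m0; rewrite /margin; lra.
  right; split; congr (_ * (_ + _)); apply: eq_bigr => z /andP [zx zx'];
    by have [-> t_eq] := succ_row_eq m0 zx zx'; rewrite ?t_eq.
have lt_x'x : v x' x < v x x' by move: m_gt0; rewrite /margin; lra.
left; split; rewrite ltr_pM2l //; apply: ltr_leD.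
- exact: lt_x'x.
- by apply: ler_sum => z /andP [zx zx']; have [] := succ_row_bounds zx zx'.
- by rewrite ltr_pM2r // invr_gt0 turnout_gt0.
- by apply: ler_sum => z /andP [zx zx']; exact: succ_ratio_le.
Qed.

End Successor.

Lemma rho_sigma_ge_lt x y : lt x y -> rho_sigma_ge v x y.
Proof.
exact: (lt_succ_ind lt_order (P := rho_sigma_ge v) (@rho_sigma_ge_succ)
          (@rho_sigma_ge_trans _ _ v)).
Qed.

End CLCRows.

Theorem corollary3p7 (R : realFieldType) (A : finType) (v : A -> A -> R) :
  (2 <= #|A|)%N ->
  llull_matrix v ->
  CLC v ->
  (forall x y : A, x != y -> 0 < turnout v x y) ->
  forall x y : A, (sigma v y < sigma v x) <-> (rho v y < rho v x).
Proof.
(* [2 <= #|A|] is redundant: distinct x, y already force it. *)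
move=> _ v_llull [lt [lt_order [v_dom [v_max [v_min turnout_step]]]]] turnout_gt0 x y.
have ge := rho_sigma_ge_lt lt_order v_dom v_max v_min turnout_step v_llull turnout_gt0.
have [->|x_neq_y] := eqVneq x y; first by rewrite !ltxx.
by case/orP: (lt_total lt_order x_neq_y) => /ge/rho_sigma_ge_ltP [].
Qed.
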